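(* Let $R$ be a commutative filtered ring and let $(M[i],\mu_i)$ be a compact-continuous-Hausdorff ray-representation, and let $i\in\mathbb{N}$. Then: (1) if $m\in M[i+1]$, then $\widetilde{\mu}_{i+1}m$ is closed in $M[i]$, and it is a linear variety if it is non-empty; (2) if $N$ is a closed submodule of $M[i+1]$, then $\widetilde{\mu}_{i+1}N$ is a closed submodule of $M[i]$. Consequently, $\bigcap_{i\ge0}\widetilde{\mu}_{\le i}M[i]$ equals the set of $m\in M[0]$ for which there exists $(m_i)\in\prod_{i\ge0}M[i]$ with $m_0=m$ and $(m_i,m_{i-1})\in\widetilde{\mu}_i$ for all $i>0$.
   Context: $R$ is filtered by a descending chain of ideals $R_n$ ($n\ge0$) with $R_pR_q\subseteq R_{p+q}$; a filtered $R$-module $M$ has a descending chain of submodules $M_n$ with $R_pM_q\subseteq M_{p+q}$, and carries the topology where the sets $m+M_n$ form a fundamental system of neighbourhoods of $m$. A linear variety is a coset $m+N$ of a submodule; $M$ is linearly compact if every family of closed linear varieties with the finite intersection property has nonempty intersection. A ray-representation: $R$-modules $M[i]$ ($i\ge0$) and, for $i\ge1$, a sign $\sigma_i\in\{+,-\}$ and an $R$-linear map $\mu_i\colon M[i]\to M[i-1]$ if $\sigma_i=-$, $\mu_i\colon M[i-1]\to M[i]$ if $\sigma_i=+$ (the restriction of a binary-tree diagram to a ray). It is compact-continuous-Hausdorff if each $M[i]$ is filtered and linearly compact, each $\mu_i$ is continuous, and $\bigcap_nM_n[i]=0$. The relation $\widetilde{\mu}_i\subseteq M[i]\oplus M[i-1]$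 is $\{(x,\mu_i(x)):x\in M[i]\}$ if $\sigma_i=-$ and $\{(\mu_i(y),y):y\in M[i-1]\}$ if $\sigma_i=+$; for $x\in M[i]$, $\widetilde{\mu}_ix=\{y:(x,y)\in\widetilde{\mu}_i\}$ and $\widetilde{\mu}_iS=\bigcup_{x\in S}\widetilde{\mu}_ix$. For $S\subseteq M[n]$, $\widetilde{\mu}_{\le n}S$ is the set of $m_0\in M[0]$ for which there exist $m_i\in M[i]$ ($1\le i\le n$) with $m_n\in S$ and $(m_i,m_{i-1})\in\widetilde{\mu}_i$; $\widetilde{\mu}_{\le0}S=S$. *)

From Stdlib Require List.
From HB Require Import structures.
From mathcomp Require Import all_boot all_algebra.
Set Implicit Arguments. Unset Strict Implicit. Unset Printing Implicit Defensive.
Import GRing.Theory.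
Local Open Scope ring_scope.

Definition is_ideal (R : comNzRingType) (I : R -> Prop) : Prop :=
  I 0 /\ (forall x y, I x -> I y -> I (x + y)) /\ (forall r x, I x -> I (r * x)).

Definition ring_filtration (R : comNzRingType) (Rf : nat -> R -> Prop) : Prop :=
  (forall n, is_ideal (Rf n)) /\
  (forall n x, Rf n.+1 x -> Rf n x) /\
  (forall p q a b, Rf p a -> Rf q b -> Rf (p + q)%N (a * b)).

Definition is_submod (R : comNzRingType) (A : lmodType R) (N : A -> Prop) : Prop :=
  N 0 /\ (forall x y, N x -> N y -> N (x + y)) /\ (forall (r : R) x, N x -> N (r *: x)).

Definition mod_filtration (R : comNzRingType) (Rf : nat -> R -> Prop)
    (A : lmodType R) (F : nat -> A -> Prop) : Prop :=
  (forall n, is_submod (F n)) /\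
  (forall n x, F n.+1 x -> F n x) /\
  (forall p q (r : R) (x : A), Rf p r -> F q x -> F (p + q)%N (r *: x)).

(* Topology: the sets m + F n form a fundamental system of nbhds of m. *)
Definition f_open (R : comNzRingType) (A : lmodType R) (F : nat -> A -> Prop)
    (U : A -> Prop) : Prop :=
  forall x, U x -> exists n, forall y, F n (y - x) -> U y.

Definition f_closed (R : comNzRingType) (A : lmodType R) (F : nat -> A -> Prop)
    (S : A -> Prop) : Prop :=
  f_open F (fun x => ~ S x).

Definition f_continuous (R : comNzRingType) (A B : lmodType R)
    (FA : nat -> A -> Prop) (FB : nat -> B -> Prop) (f : A -> B) : Prop :=
  forall x n, exists k, forall y, FA k (y - x) -> FB n (f y - f x).

Definition linear_variety (R : comNzRingType) (A : lmodType R) (S : A -> Prop) : Prop :=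
  exists (m : A) (N : A -> Prop), is_submod N /\ forall x, S x <-> N (x - m).

Definition linearly_compact (R : comNzRingType) (A : lmodType R)
    (F : nat -> A -> Prop) : Prop :=
  forall Fam : (A -> Prop) -> Prop,
    (forall S, Fam S -> f_closed F S /\ linear_variety S) ->
    (forall s : list (A -> Prop), (forall S, List.In S s -> Fam S) ->
        exists x, forall S, List.In S s -> S x) ->
    exists x, forall S, Fam S -> S x.

(* The sign sigma i (i >= 1) is encoded as a bool:
   true = '+', false = '-'.  mu i is the map mu_{i+1} between M i and M (i+1):
   if sigma (i+1) = '+' it is a linear map M i -> M (i+1),
   if sigma (i+1) = '-' it is a linear map M (i+1) -> M i. *)
Definition ray_map (R : comNzRingType) (s : bool) (A B : lmodType R) : Type :=
  if s then {linear A -> B} else {linear B -> A}.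

(* The relation mu~ ⊆ B ⊕ A (B = M[i+1], A = M[i]). *)
Definition ray_rel (R : comNzRingType) (s : bool) (A B : lmodType R)
    : ray_map s A B -> B -> A -> Prop :=
  match s as b return ray_map b A B -> B -> A -> Prop with
  | true => fun f x y => x = f y
  | false => fun f x y => y = f x
  end.

Definition ray_cont (R : comNzRingType) (s : bool) (A B : lmodType R)
    (FA : nat -> A -> Prop) (FB : nat -> B -> Prop) : ray_map s A B -> Prop :=
  match s as b return ray_map b A B -> Prop with
  | true => fun f => f_continuous FA FB f
  | false => fun f => f_continuous FB FA f
  end.

Definition rel_img (R : comNzRingType) (M : nat -> lmodType R) (sigma : nat -> bool)
    (mu : forall i, ray_map (sigma i.+1) (M i) (M i.+1)) (i : nat)
    (S : M i.+1 -> Prop) : M i -> Prop :=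
  fun y => exists x, S x /\ ray_rel (mu i) x y.

Definition rel_img_le (R : comNzRingType) (M : nat -> lmodType R) (sigma : nat -> bool)
    (mu : forall i, ray_map (sigma i.+1) (M i) (M i.+1)) (n : nat)
    (S : M n -> Prop) : M 0 -> Prop :=
  fun m0 => exists m : forall i, M i,
    m 0%N = m0 /\ S (m n) /\ (forall i, (i < n)%N -> ray_rel (mu i) (m i.+1) (m i)).

Definition ccH_ray (R : comNzRingType) (Rf : nat -> R -> Prop)
    (M : nat -> lmodType R) (MF : forall i, nat -> M i -> Prop) (sigma : nat -> bool)
    (mu : forall i, ray_map (sigma i.+1) (M i) (M i.+1)) : Prop :=
  (forall i, mod_filtration Rf (MF i)) /\
  (forall i, linearly_compact (MF i)) /\
  (forall i, ray_cont (MF i) (MF i.+1) (mu i)) /\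
  (forall i x, (forall n, MF i n x) -> x = 0).

From HB Require Import structures.
From mathcomp Require Import all_boot all_algebra.
From Stdlib Require Import Classical ClassicalEpsilon.
Set Implicit Arguments. Unset Strict Implicit. Unset Printing Implicit Defensive.
Import GRing.Theory.
Local Open Scope ring_scope.

(* Each relation of the ray is the graph of a continuous linear map, read in one
   direction or the other, so the image of a set under it is either a preimage
   (closed, and a coset of the kernel when it is a fibre) or a direct image.  A
   point [x] in the closure of [f N], for [N] a closed submodule of a linearly
   compact module, makes the closed linear varieties [N ∩ f^-1 (x + F_n)] a
   family with the finite intersection property; a common point [z] has
   [f z - x] in every [F_n], so [f z = x] by the Hausdorff property.
   For the consequence, the sets [reach i d] of elements of [M[i]] that start a
   chain of length [d] are closed submodules by (2).  If [x] lies in all of them,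
   the closed linear varieties [reach (i+1) d] meet the fibre of [x] with the
   finite intersection property, so some [y] in the fibre lies in all of them;
   dependent choice iterates this step into an infinite chain. *)

Definition f_hausdorff (R : comNzRingType) (A : lmodType R) (F : nat -> A -> Prop) :=
  forall x, (forall n, F n x) -> x = 0.

Section SetExtensionality.
Variables (R : comNzRingType) (A : lmodType R) (P Q : A -> Prop).
Hypothesis PQ : forall x, P x <-> Q x.

Lemma is_submod_ext : is_submod P -> is_submod Q.
Proof.
move=> [P0 [PD PZ]]; split; first exact/PQ.
by split=> [x y /PQ Px /PQ Py | r x /PQ Px]; apply/PQ; auto.
Qed.

Lemma f_closed_ext (F : nat -> A -> Prop) : f_closed F P -> f_closed F Q.
Proof.
move=> clP x Qx; have [n Hn] := clP x (fun Px => Qx (proj1 (PQ x) Px)).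
by exists n => y /Hn nPy /PQ.
Qed.

Lemma linear_variety_ext : linear_variety P -> linear_variety Q.
Proof.
move=> [m [N [subN HP]]]; exists m, N; split=> // x.
by rewrite -HP; split=> /PQ.
Qed.

End SetExtensionality.

Section Submodules.
Variables (R : comNzRingType) (A B : lmodType R) (N : A -> Prop).
Hypothesis subN : is_submod N.

Lemma submodN x : N x -> N (- x).
Proof. by case: subN => _ [_ NZ] Nx; rewrite -scaleN1r; apply: NZ. Qed.

Lemma submodB x y : N x -> N y -> N (x - y).
Proof. by case: subN => _ [ND _] Nx Ny; apply/ND/submodN. Qed.

Lemma linear_variety_submod : linear_variety N.
Proof. by exists 0, N; split=> // x; rewrite subr0. Qed.

Lemma is_submod_preim (f : {linear B -> A}) : is_submod (fun b => N (f b)).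
Proof.
case: subN => N0 [ND NZ]; split; first by rewrite linear0.
by split=> [x y Nx Ny | r x Nx]; rewrite ?linearD ?linearZ_LR; auto.
Qed.

Lemma is_submod_img (f : {linear A -> B}) :
  is_submod (fun b => exists a, N a /\ b = f a).
Proof.
case: subN => N0 [ND NZ]; split; first by exists 0; rewrite linear0.
split=> [_ _ [x [Nx ->]] [y [Ny ->]] | r _ [x [Nx ->]]].
  by exists (x + y); rewrite linearD; auto.
by exists (r *: x); rewrite linearZ_LR; auto.
Qed.

End Submodules.

Lemma linear_variety_eq (R : comNzRingType) (A : lmodType R) (c : A) :
  linear_variety (fun x => x = c).
Proof.
exists c, (fun z => z = 0); split.
  by split=> //; split=> [_ _ -> -> | r _ ->]; rewrite ?addr0 ?scaler0.
move=> x; split=> [-> | /eqP]; first by rewrite subrr.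
by rewrite subr_eq0 => /eqP.
Qed.

Lemma linear_variety_preim (R : comNzRingType) (A B : lmodType R)
    (f : {linear A -> B}) (S : B -> Prop) :
  linear_variety S -> (exists a, S (f a)) -> linear_variety (fun a => S (f a)).
Proof.
move=> [m [N [subN HS]]] [a0 /HS Na0]; exists a0, (fun a => N (f a)).
split; first exact: is_submod_preim.
move=> a; rewrite HS linearB.
have -> : f a - f a0 = (f a - m) - (f a0 - m) by rewrite opprB addrA subrK.
split=> [Na | Nd]; first exact: submodB.
by rewrite -(subrK (f a0 - m) (f a - m)); case: subN => _ [ND _]; apply: ND.
Qed.

Lemma f_closed_preim (R : comNzRingType) (A B : lmodType R)
    (FA : nat -> A -> Prop) (FB : nat -> B -> Prop) (f : A -> B) (S : B -> Prop) :
  f_continuous FA FB f -> f_closed FB S -> f_closed FA (fun a => S (f a)).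
Proof.
move=> fcont clS x nSfx; have [n Hn] := clS _ nSfx; have [k Hk] := fcont x n.
by exists k => y /Hk /Hn.
Qed.

Section FilteredModule.
Variables (R : comNzRingType) (A : lmodType R) (F : nat -> A -> Prop).
Hypothesis F_submod : forall n, is_submod (F n).

Lemma f_closed_eq (c : A) : f_hausdorff F -> f_closed F (fun x => x = c).
Proof.
move=> hausF x /eqP; rewrite -subr_eq0 => /eqP xc.
have [n nFn] : exists n, ~ F n (x - c).
  by apply: not_all_ex_not => Fxc; apply/xc/hausF.
by exists n => y Fyx yc; apply: nFn; rewrite -yc -opprB; apply: submodN.
Qed.

Lemma f_closed_coset n (c : A) : f_closed F (fun x => F n (x - c)).
Proof.
move=> x nFxc; exists n => y Fyx Fyc; apply: nFxc.
have -> : x - c = (y - c) - (y - x) by rewrite opprB [in RHS]addrC addrA subrK.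
exact: submodB.
Qed.

Hypothesis F_desc : forall n x, F n.+1 x -> F n x.

Lemma filtration_leq n k x : (n <= k)%N -> F k x -> F n x.
Proof. by move=> /subnK <-; elim: (k - n)%N => // d IH /F_desc. Qed.

End FilteredModule.

Lemma linearly_compact_nat_family (R : comNzRingType) (A : lmodType R)
    (F : nat -> A -> Prop) (V : A -> Prop) (P : nat -> A -> Prop) :
  linearly_compact F -> f_closed F V -> linear_variety V ->
  (forall n, f_closed F (P n) /\ linear_variety (P n)) ->
  (forall K, exists z, V z /\ forall n, (n <= K)%N -> P n z) ->
  exists z, V z /\ forall n, P n z.
Proof.
move=> lcF clV lvV clP finP.
have [|l inl | z Hz] := lcF (fun S => S = V \/ exists n, S = P n).
- by move=> S [-> | [n ->]].
- have [K HK] : exists K, forall S, List.In S l ->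
      S = V \/ exists2 n, (n <= K)%N & S = P n.
    elim: l inl => [|S l IH] inl; first by exists 0%N.
    have [K HK] := IH (fun S' lS' => inl S' (or_intror lS')).
    have [-> | [n ->]] := inl S (or_introl erefl).
      by exists K => S' [<- | /HK]; [left |].
    exists (maxn K n) => S' [<- | /HK [-> | [k lekK ->]]].
    + by right; exists n; rewrite ?leq_maxr.
    + by left.
    + by right; exists k; rewrite ?(leq_trans lekK (leq_maxl _ _)).
  have [z [Vz Pz]] := finP K.
  by exists z => S /HK [-> | [n lenK ->]]; last exact: Pz.
- by exists z; split=> [|n]; apply: Hz; [left | right; exists n].
Qed.

Section ClosedImage.
Variables (R : comNzRingType) (A B : lmodType R).
Variables (FA : nat -> A -> Prop) (FB : nat -> B -> Prop).
Hypotheses (FA_submod : forall n, is_submod (FA n))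
  (FA_desc : forall n x, FA n.+1 x -> FA n x) (FA_hausdorff : f_hausdorff FA)
  (FB_lcompact : linearly_compact FB).

Lemma f_closed_img_submod (f : {linear B -> A}) (N : B -> Prop) :
  f_continuous FB FA f -> is_submod N -> f_closed FB N ->
  f_closed FA (fun a => exists b, N b /\ a = f b).
Proof.
move=> fcont subN clN x nNx; apply: NNPP => notopen.
have near n : exists z, N z /\ FA n (f z - x).
  apply: NNPP => far; apply: notopen; exists n => y Fyx [z [Nz yfz]].
  by apply: far; exists z; rewrite -yfz.
pose P n z := FA n (f z - x).
have clP n : f_closed FB (P n) /\ linear_variety (P n).
  have [z [_ Pz]] := near n.
  split; first exact: (f_closed_preim fcont
    (f_closed_coset FA_submod (n := n) (c := x))).
  apply: (linear_variety_preim (S := fun a => FA n (a - x))); last by exists z.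
  by exists x, (FA n).
have finP K : exists z, N z /\ forall n, (n <= K)%N -> P n z.
  have [z [Nz Pz]] := near K; exists z; split=> // n lenK.
  exact: (filtration_leq FA_desc lenK Pz).
have [z [Nz Pz]] := linearly_compact_nat_family FB_lcompact clN
  (linear_variety_submod subN) clP finP.
apply: nNx; exists z; split=> //; apply/eqP; rewrite eq_sym -subr_eq0.
exact/eqP/FA_hausdorff.
Qed.

End ClosedImage.

Definition ray_img (R : comNzRingType) (s : bool) (A B : lmodType R)
    (f : ray_map s A B) (S : B -> Prop) : A -> Prop :=
  fun a => exists b, S b /\ ray_rel f b a.

Lemma ray_img_eq_preim (R : comNzRingType) (A B : lmodType R)
    (g : {linear A -> B}) (b : B) (a : A) :
  ray_img (s := true) g (fun x => x = b) a <-> g a = b.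
Proof. by split=> [[_ [-> ->]] | <-]; last exists (g a). Qed.

Lemma ray_img_eq_img (R : comNzRingType) (A B : lmodType R)
    (g : {linear B -> A}) (b : B) (a : A) :
  ray_img (s := false) g (fun x => x = b) a <-> a = g b.
Proof. by split=> [[_ [-> ->]] | ->]; last exists b. Qed.

Section RayRelation.
Variables (R : comNzRingType) (A B : lmodType R).
Variables (FA : nat -> A -> Prop) (FB : nat -> B -> Prop).
Hypotheses (FA_submod : forall n, is_submod (FA n)) (FA_hausdorff : f_hausdorff FA)
  (FB_submod : forall n, is_submod (FB n)) (FB_hausdorff : f_hausdorff FB).
Variables (s : bool) (f : ray_map s A B).
Hypothesis f_cont : ray_cont FA FB f.

Lemma ray_img_eq_closed (b : B) : f_closed FA (ray_img f (fun x => x = b)).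
Proof.
case: s f f_cont => /= g gcont.
  apply: (f_closed_ext (fun a => iff_sym (ray_img_eq_preim g b a))).
  exact: (f_closed_preim gcont (f_closed_eq FB_submod (c := b) FB_hausdorff)).
apply: (f_closed_ext (fun a => iff_sym (ray_img_eq_img g b a))).
exact: f_closed_eq.
Qed.

Lemma ray_img_eq_linear_variety (b : B) :
  (exists a, ray_img f (fun x => x = b) a) ->
  linear_variety (ray_img f (fun x => x = b)).
Proof.
case: s f => /= g [a0 img_a0].
  apply: (linear_variety_ext (fun a => iff_sym (ray_img_eq_preim g b a))).
  apply: (linear_variety_preim (S := fun x => x = b)); first exact: linear_variety_eq.
  by exists a0; apply/ray_img_eq_preim.
apply: (linear_variety_ext (fun a => iff_sym (ray_img_eq_img g b a))).
exact: linear_variety_eq.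
Qed.

Lemma ray_fiber_closed (a : A) : f_closed FB (fun b => ray_rel f b a).
Proof.
case: s f f_cont => /= g gcont; first exact: f_closed_eq.
apply: (f_closed_ext (P := fun b => g b = a)); first by move=> b; split=> ->.
exact: (f_closed_preim gcont (f_closed_eq FA_submod (c := a) FA_hausdorff)).
Qed.

Lemma ray_fiber_linear_variety (a : A) :
  (exists b, ray_rel f b a) -> linear_variety (fun b => ray_rel f b a).
Proof.
case: s f => /= g [b0 ab0]; first exact: linear_variety_eq.
apply: (linear_variety_ext (P := fun b => g b = a)); first by move=> b; split=> ->.
apply: (linear_variety_preim (S := fun x => x = a)); first exact: linear_variety_eq.
by exists b0.
Qed.

Hypotheses (FA_desc : forall n x, FA n.+1 x -> FA n x)
  (FB_lcompact : linearly_compact FB).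

Lemma ray_img_closed_submod (N : B -> Prop) :
  is_submod N -> f_closed FB N ->
  is_submod (ray_img f N) /\ f_closed FA (ray_img f N).
Proof.
case: s f f_cont => /= g gcont subN clN.
  have img_preim a : N (g a) <-> ray_img (s := true) g N a.
    by split=> [Nga | [b [Nb <-]]]; first exists (g a).
  split; first exact: (is_submod_ext img_preim (is_submod_preim subN g)).
  exact: (f_closed_ext img_preim (f_closed_preim gcont clN)).
split; first exact: is_submod_img subN g.
exact: (f_closed_img_submod FA_submod FA_desc FA_hausdorff FB_lcompact gcont subN clN).
Qed.

End RayRelation.

Lemma dependent_choice_seq (T : nat -> Type) (P : forall i, T i -> Prop)
    (rel : forall i, T i.+1 -> T i -> Prop) (x0 : T 0%N) :
  P 0%N x0 -> (forall i x, P i x -> exists y, P i.+1 y /\ rel i y x) ->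
  exists s : forall i, T i, s 0%N = x0 /\ forall i, rel i (s i.+1) (s i).
Proof.
move=> Px0 step.
have next i (x : {x | P i x}) : {y : {y | P i.+1 y} | rel i (sval y) (sval x)}.
  apply: constructive_indefinite_description.
  by have [y [Py rel_yx]] := step i _ (svalP x); exists (exist _ y Py).
pose s := nat_rect (fun i => {x | P i x}) (exist _ x0 Px0) (fun i x => sval (next i x)).
by exists (fun i => sval (s i)); split=> // i; apply: (svalP (next i (s i))).
Qed.

Section Reach.
Variables (R : comNzRingType) (Rf : nat -> R -> Prop) (M : nat -> lmodType R).
Variables (MF : forall i, nat -> M i -> Prop) (sigma : nat -> bool).
Arguments MF : clear implicits.
Variable mu : forall i, ray_map (sigma i.+1) (M i) (M i.+1).
Hypothesis ray_ccH : ccH_ray Rf MF mu.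

Fixpoint reach (i d : nat) {struct d} : M i -> Prop :=
  if d is d'.+1 then rel_img mu (@reach i.+1 d') else fun _ => True.
Arguments reach : clear implicits.

Lemma reach_succ d i x : reach i d.+1 x -> reach i d x.
Proof.
elim: d i x => // d IH i x [y [reach_y rel_yx]].
by exists y; split=> //; apply: IH.
Qed.

Lemma reach_leq d d' i x : (d <= d')%N -> reach i d' x -> reach i d x.
Proof. by move=> /subnK <-; elim: (d' - d)%N => // k IH /reach_succ. Qed.

Lemma reach_closed_submod d i : is_submod (reach i d) /\ f_closed (MF i) (reach i d).
Proof.
have [MF_filtration [MF_lcompact [mu_cont MF_hausdorff]]] := ray_ccH.
elim: d i => [|d IH] i; first by split=> [|x []].
have [MFi_submod [MFi_desc _]] := MF_filtration i.
have [subN clN] := IH i.+1.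
exact: (ray_img_closed_submod MFi_submod (MF_hausdorff i) (mu_cont i) MFi_desc
  (MF_lcompact i.+1) subN clN).
Qed.

Lemma reach_next i (x : M i) : (forall d, reach i d x) ->
  exists y, (forall d, reach i.+1 d y) /\ ray_rel (mu i) y x.
Proof.
have [MF_filtration [MF_lcompact [mu_cont MF_hausdorff]]] := ray_ccH.
move=> reach_x.
have [MFi_submod _] := MF_filtration i; have [MFi1_submod _] := MF_filtration i.+1.
have [y0 [_ rel_y0x]] := reach_x 1%N.
have clP d : f_closed (MF i.+1) (reach i.+1 d) /\ linear_variety (reach i.+1 d).
  have [subN clN] := reach_closed_submod d i.+1.
  by split; last exact: linear_variety_submod.
have finP K : exists y, ray_rel (mu i) y x /\ forall d, (d <= K)%N -> reach i.+1 d y.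
  have [y [reach_y rel_yx]] := reach_x K.+1.
  by exists y; split=> // d /reach_leq; apply.
have [y [rel_yx reach_y]] := linearly_compact_nat_family (MF_lcompact i.+1)
  (ray_fiber_closed MFi_submod (MF_hausdorff i) MFi1_submod (MF_hausdorff i.+1)
    (mu_cont i) (a := x))
  (ray_fiber_linear_variety (ex_intro _ y0 rel_y0x)) clP finP.
by exists y.
Qed.

Lemma reach_chain (ms : forall i, M i) i d :
  (forall j, (i <= j < i + d)%N -> ray_rel (mu j) (ms j.+1) (ms j)) ->
  reach i d (ms i).
Proof.
elim: d i => // d IH i rel_ms; exists (ms i.+1); split.
  by apply: IH => j /andP [leij ltj]; apply: rel_ms; rewrite ltnW // addnS ltj.
by apply: rel_ms; rewrite leqnn addnS ltnS leq_addr.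
Qed.

Lemma reach_all_chain (x : M 0%N) : (forall d, reach 0%N d x) ->
  exists ms : forall i, M i, ms 0%N = x /\ forall i, ray_rel (mu i) (ms i.+1) (ms i).
Proof.
move=> reach_x; apply: (dependent_choice_seq (P := fun i y => forall d, reach i d y)
  (rel := fun i z y => ray_rel (mu i) z y)) => // i y; exact: reach_next.
Qed.

End Reach.

Theorem lemma5p16 (R : comNzRingType) (Rf : nat -> R -> Prop)
    (M : nat -> lmodType R) (MF : forall i, nat -> M i -> Prop)
    (sigma : nat -> bool) (mu : forall i, ray_map (sigma i.+1) (M i) (M i.+1)) :
  ring_filtration Rf ->
  ccH_ray Rf MF mu ->
  (forall (i : nat) (m : M i.+1),
      f_closed (MF i) (rel_img mu (fun x => x = m)) /\
      ((exists y, rel_img mu (fun x => x = m) y) ->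
         linear_variety (rel_img mu (fun x => x = m)))) /\
  (forall (i : nat) (N : M i.+1 -> Prop),
      is_submod N -> f_closed (MF i.+1) N ->
      is_submod (rel_img mu N) /\ f_closed (MF i) (rel_img mu N)) /\
  (forall m : M 0%N,
      (forall i, rel_img_le mu (fun _ : M i => True) m) <->
      (exists ms : forall i, M i,
          ms 0%N = m /\ forall i, ray_rel (mu i) (ms i.+1) (ms i))).
Proof.
move=> _ ray_ccH.
have [MF_filtration [MF_lcompact [mu_cont MF_hausdorff]]] := ray_ccH.
have MF_submod i : forall n, is_submod (MF i n) by case: (MF_filtration i).
split; [|split].
- move=> i m; split; last exact: ray_img_eq_linear_variety.
  exact: (ray_img_eq_closed (MF_submod i) (MF_hausdorff i) (MF_submod i.+1)
    (MF_hausdorff i.+1) (mu_cont i)).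
- move=> i N; have [_ [MF_desc _]] := MF_filtration i.
  exact: (ray_img_closed_submod (MF_submod i) (MF_hausdorff i) (mu_cont i) MF_desc
    (MF_lcompact i.+1)).
- move=> m; split=> [reach_m | [ms [ms0 rel_ms]] n]; last by exists ms.
  apply: (reach_all_chain ray_ccH) => d.
  have [ms [<- [_ rel_ms]]] := reach_m d.
  by apply: reach_chain => j /andP [_ /rel_ms].
Qed.
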